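(* Let $\Sigma$ be a positive definite $5\times 5$ real matrix of the form $\Sigma=\Delta+\Gamma\Gamma^t$ with $\Delta$ positive definite diagonal and $\Gamma\in\mathbb{R}^{5\times 2}$ of rank $2$. Assume that $\Sigma$ admits no representation $\Sigma=\Delta'+\Gamma'\Gamma'^t$ with $\Delta'$ positive definite diagonal and $\Gamma'\in\mathbb{R}^{5\times 2}$ of rank at most $1$, and that every row of $\Sigma$ contains at least one nonzero off-diagonal entry. Let $k$ be the largest integer $n$ for which there is $A\subseteq\{1,\dots,5\}$ with $|A|=n$ and $\mathrm{rk}(\Gamma_A)=1$, where $\Gamma_A$ denotes the rows of $\Gamma$ indexed by $A$. Then $k\le 3$, and: (i) If $k\in\{1,2\}$, then for every representation $\Sigma=D+GG^t$ with $D$ positive definite diagonal and $G\in\mathbb{R}^{5\times 2}$, we have $GG^t=\Gamma\Gamma^t$. (ii) If $k=3$, then after permuting rows (and correspondingly rows and columns of $\Sigma$) so that $\mathrm{rk}(\Gamma_{\{1,2,3\}})=1$, there is an orthogonal $2\times 2$ matrix $Q$ such that $\Gamma Q=(\gamma_{ij})$ satisfies $\gamma_{12}=\gamma_{22}=\gamma_{32}=0$ and $\gamma_{11},\gamma_{21},\gamma_{31},\gamma_{42},\gamma_{52}$ are all nonzero. Moreover, for every other representation $\Sigma=D+GG^t$ with $D$ positive definite diagonal and $G\in\mathbb{R}^{5\times 2}$, there is an orthogonal $2\times 2$ matrix $Q'$ such that $GQ'=(g_{ij})$ has $g_{12}=g_{22}=g_{32}=0$, $g_{42}\neq0$, $g_{52}\neq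 0$, the first column of $GQ'$ equals the first column of $\Gamma Q$, and $g_{42}g_{52}=\gamma_{42}\gamma_{52}$. *)

From HB Require Import structures.
From mathcomp Require Import all_boot all_order all_algebra.
Set Implicit Arguments. Unset Strict Implicit. Unset Printing Implicit Defensive.
Import Order.TTheory GRing.Theory Num.Theory.
Local Open Scope ring_scope.

Definition posdiag (R : rcfType) (n : nat) (D : 'M[R]_n) : Prop :=
  (forall i j : 'I_n, i != j -> D i j = 0) /\ (forall i : 'I_n, 0 < D i i).

Definition posdef (R : rcfType) (n : nat) (S : 'M[R]_n) : Prop :=
  S^T = S /\ forall x : 'cV[R]_n, x != 0 -> 0 < (x^T *m S *m x) 0 0.

Definition orthogonal_mx (R : rcfType) (n : nat) (Q : 'M[R]_n) : Prop :=
  Q *m Q^T = 1%:M.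

Definition rows_of (R : rcfType) (m n : nat) (A : {set 'I_m}) (G : 'M[R]_(m, n))
  : 'M[R]_(#|A|, n) :=
  \matrix_(i < #|A|, j < n) G (enum_val i) j.

(* k : the largest |A| with rk(G_A) = 1 (0 if there is no such A) *)
Definition kmax (R : rcfType) (m n : nat) (G : 'M[R]_(m, n)) : nat :=
  \max_(A : {set 'I_m} | \rank (rows_of A G) == 1%N) #|A|.

From HB Require Import structures.
From mathcomp Require Import all_boot all_order all_algebra.
From mathcomp Require Import ring zify.
Set Implicit Arguments. Unset Strict Implicit. Unset Printing Implicit Defensive.
Import Order.TTheory GRing.Theory Num.Theory.
Local Open Scope ring_scope.

(* Write r_i for the i-th row of a factor matrix G in R^2; then the
   off-diagonal entries of Sigma are the inner products <r_i, r_j>, and the only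
   unknowns of another representation D + G G^T are the squared norms |r_i|^2.

   1. Plane geometry of rows: inner products [dotr], 2x2 determinants [crossr],
      the Lagrange and Binet-Cauchy identities, the vanishing of the Gram
      determinant of three plane vectors, and the fact that a set of rows has
      rank one exactly when its rows are pairwise parallel ([crossr] = 0).
      [rotmx M a] is the rotation taking r_a to the first axis.
   2. Factor model facts for any number of variables:
      - if all rows but at most one are parallel to a nonzero row r_a, the model
        has a rank-one representation (project every row on the line of r_a);
      - |r_i|^2 is determined by the off-diagonal entries as soon as four other
        rows split into two non-parallel pairs (Gram determinant expansion).
   3. Five variables: no rank-one representation forces k <= 3; for k <= 2 no
      three rows are parallel, so every index has such a splitting and the whole
      Gram matrix is identified; for k = 3 the rows of the parallel triple A
      meet the two remaining rows non-parallelly, which identifies the norms on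
      A and yields the rotated normal form of every representation. *)

Section PlaneRows.
Variables (R : rcfType) (m : nat).
Implicit Types (M : 'M[R]_(m, 2)) (A : {set 'I_m}).

Definition dotr M (i j : 'I_m) : R := M i ord0 * M j ord0 + M i ord_max * M j ord_max.

Definition crossr M (i j : 'I_m) : R := M i ord0 * M j ord_max - M i ord_max * M j ord0.

Lemma ord2P (c : 'I_2) : c = ord0 \/ c = ord_max.
Proof. by case: c => [[|[|//]]] ?; [left|right]; apply: val_inj. Qed.

Lemma sum_ord2 (F : 'I_2 -> R) : \sum_(k < 2) F k = F ord0 + F ord_max.
Proof. by rewrite big_ord_recr big_ord1; congr (F _ + F _); apply: val_inj. Qed.

Lemma gram_mxE M i j : (M *m M^T) i j = dotr M i j.
Proof. by rewrite !mxE sum_ord2 !mxE. Qed.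

Lemma crossrN M i j : crossr M j i = - crossr M i j.
Proof. by rewrite /crossr; ring. Qed.

Lemma crossrr M i : crossr M i i = 0.
Proof. by rewrite /crossr; ring. Qed.

Lemma dotrr_ge0 M i : 0 <= dotr M i i.
Proof. by rewrite /dotr addr_ge0 // -expr2 sqr_ge0. Qed.

Lemma dotrr_eq0 M i : dotr M i i = 0 -> forall c, M i c = 0.
Proof.
move/eqP; rewrite /dotr paddr_eq0 -?expr2 ?sqr_ge0 // !sqrf_eq0 => /andP[/eqP h0 /eqP h1].
by move=> c; case: (ord2P c) => ->.
Qed.

Lemma dotr_neq0 M i j : dotr M i j != 0 -> dotr M i i != 0.
Proof. by apply: contraNneq => /dotrr_eq0 hi; rewrite /dotr !hi !mul0r addr0. Qed.

Lemma lagrange M a i j :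
  dotr M a a * dotr M i j - dotr M i a * dotr M j a = crossr M a i * crossr M a j.
Proof. by rewrite /dotr /crossr; ring. Qed.

Lemma binet_cauchy M j l p q :
  dotr M j p * dotr M l q - dotr M j q * dotr M l p = crossr M j l * crossr M p q.
Proof. by rewrite /dotr /crossr; ring. Qed.

(* The Gram determinant of three plane vectors i, j, l, computed against the
   vectors i, p, q, vanishes; expanding along the first row expresses |r_i|^2
   times a Binet-Cauchy coefficient through inner products of distinct rows. *)
Lemma gram3_expansion M i j l p q :
  dotr M i i * (dotr M j p * dotr M l q - dotr M j q * dotr M l p) =
  dotr M i p * (dotr M j i * dotr M l q - dotr M j q * dotr M l i)
  - dotr M i q * (dotr M j i * dotr M l p - dotr M j p * dotr M l i).
Proof. by rewrite /dotr; ring. Qed.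

Lemma row_parallel M a u : dotr M a a != 0 -> crossr M a u = 0 ->
  row u M = (dotr M u a / dotr M a a) *: row a M.
Proof.
move=> nz_a hau; apply/rowP => c; rewrite !mxE; apply: (mulIf nz_a).
rewrite mulrAC divfK //; case: (ord2P c) => ->.
- have -> : M u ord0 * dotr M a a = dotr M u a * M a ord0 - M a ord_max * crossr M a u.
    by rewrite /dotr /crossr; ring.
  by rewrite hau mulr0 subr0.
- have -> : M u ord_max * dotr M a a = dotr M u a * M a ord_max + M a ord0 * crossr M a u.
    by rewrite /dotr /crossr; ring.
  by rewrite hau mulr0 addr0.
Qed.

(* In a rank-one set of rows any two rows are parallel: otherwise they would
   form an invertible 2x2 submatrix (inverse given by the adjugate). *)
Lemma rows_of_rank1_cross M A i j :
  \rank (rows_of A M) = 1%N -> i \in A -> j \in A -> crossr M i j = 0.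
Proof.
move=> rk1 iA jA; apply/eqP; apply: contraT => nz_ij.
pose Mij : 'M[R]_2 := \matrix_(r, c) M (if r == ord0 then i else j) c.
pose adj : 'M[R]_2 := \matrix_(r, c)
  if r == ord0 then (if c == ord0 then M j ord_max else - M i ord_max)
  else (if c == ord0 then - M j ord0 else M i ord0).
have Mij_inv : Mij *m ((crossr M i j)^-1 *: adj) = 1%:M.
  apply/matrixP => r c; rewrite !mxE sum_ord2 !mxE /=.
  by case: (ord2P r) => ->; case: (ord2P c) => -> /=; rewrite /crossr in nz_ij *; field.
have rk_Mij : \rank Mij = 2%N.
  by apply/eqP; rewrite -/(row_free Mij) row_free_unit; case: (mulmx1_unit Mij_inv).
have Mij_sub : (Mij <= rows_of A M)%MS.
  apply/row_subP => r.
  have -> : row r Mij =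
      row (if r == ord0 then enum_rank_in iA i else enum_rank_in jA j) (rows_of A M).
    by apply/rowP => c; rewrite !mxE; case: (r == ord0); rewrite enum_rankK_in.
  exact: row_sub.
by have := mxrankS Mij_sub; rewrite rk_Mij rk1.
Qed.

Lemma rows_of_rank1 M A a : a \in A -> dotr M a a != 0 ->
  (forall i, i \in A -> crossr M a i = 0) -> \rank (rows_of A M) = 1%N.
Proof.
move=> aA nz_a par_a; apply/eqP; rewrite eqn_leq; apply/andP; split.
- apply: leq_trans (mxrankS _) (rank_leq_row (row a M)); apply/row_subP => k.
  have -> : row k (rows_of A M) = row (enum_val k) M by apply/rowP => c; rewrite !mxE.
  by rewrite (row_parallel nz_a (par_a _ (enum_valP k))) scalemx_sub.
- rewrite lt0n mxrank_eq0; apply: contraNneq nz_a => /matrixP rows0.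
  have a0 c : M a c = 0 by have := rows0 (enum_rank_in aA a) c; rewrite !mxE enum_rankK_in.
  by rewrite /dotr !a0 mul0r addr0.
Qed.

Lemma sqrt_dotr_neq0 M a : dotr M a a != 0 -> Num.sqrt (dotr M a a) != 0.
Proof. by move=> nz_a; rewrite gt_eqF // sqrtr_gt0 lt0r nz_a dotrr_ge0. Qed.

Lemma sqrt_dotrK M a : Num.sqrt (dotr M a a) ^+ 2 = dotr M a a.
Proof. by rewrite sqr_sqrtr // dotrr_ge0. Qed.

(* The rotation sending r_a to (|r_a|, 0): in M (rotmx M a) the first column
   holds <r_i, r_a> / |r_a| and the second det(r_a, r_i) / |r_a|. *)
Definition rotmx M a : 'M[R]_2 := (Num.sqrt (dotr M a a))^-1 *: \matrix_(r, c)
  if r == ord0 then (if c == ord0 then M a ord0 else - M a ord_max)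
  else (if c == ord0 then M a ord_max else M a ord0).

Lemma rotmx_col0 M a i : (M *m rotmx M a) i ord0 = dotr M i a / Num.sqrt (dotr M a a).
Proof. by rewrite !mxE sum_ord2 !mxE /= /dotr; ring. Qed.

Lemma rotmx_col1 M a i : (M *m rotmx M a) i ord_max = crossr M a i / Num.sqrt (dotr M a a).
Proof. by rewrite !mxE sum_ord2 !mxE /= /crossr; ring. Qed.

Lemma rotmx_orthogonal M a : dotr M a a != 0 -> orthogonal_mx (rotmx M a).
Proof.
move=> nz_a; have nz_s := sqrt_dotr_neq0 nz_a.
have norm1 : dotr M a a / Num.sqrt (dotr M a a) ^+ 2 = 1 by rewrite sqrt_dotrK divff.
apply/matrixP => r c; rewrite !mxE sum_ord2 !mxE.
case: (ord2P r) => ->; case: (ord2P c) => -> /=; rewrite -?norm1 /dotr; field; exact: nz_s.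
Qed.

Lemma parallel_dotr_neq0 M a i : dotr M a a != 0 -> dotr M i i != 0 ->
  crossr M a i = 0 -> dotr M i a != 0.
Proof.
move=> nz_a nz_i par_ai; apply: contra_neq (mulf_neq0 nz_a nz_i) => ia0.
by have := lagrange M a i i; rewrite ia0 par_ai !mul0r subr0.
Qed.

Definition no_parallel_triple M : Prop :=
  forall u v w, uniq [:: u; v; w] -> crossr M u v = 0 -> crossr M u w = 0 -> False.

Lemma kmax_no_parallel_triple M : (kmax M <= 2)%N -> (forall u, dotr M u u != 0) ->
  no_parallel_triple M.
Proof.
move=> k2 nz u v w uvw uv0 uw0; pose A := [set x in [:: u; v; w]].
have rk1 : \rank (rows_of A M) = 1%N.
  apply: (rows_of_rank1 (a := u)); rewrite ?inE ?eqxx // => x.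
  by rewrite !inE => /or3P[] /eqP ->; rewrite ?crossrr.
have : (#|A| <= kmax M)%N.
  by rewrite /kmax; apply: (leq_bigmax_cond (F := fun B : {set 'I_m} => #|B|)); rewrite rk1.
by rewrite cardsE (card_uniqP uvw) => /leq_trans/(_ k2).
Qed.

(* Four rows without a parallel triple can be split into two non-parallel
   pairs: parallelism then pairs off at most two disjoint couples. *)
Lemma nonparallel_pairing M p q r s : no_parallel_triple M -> uniq [:: p; q; r; s] ->
  exists j l j' l', [/\ perm_eq [:: j; j'; l; l'] [:: p; q; r; s],
                       crossr M j l != 0 & crossr M j' l' != 0].
Proof.
move=> npt; rewrite /= !inE !negb_or => /and4P[/and3P[pq pr ps] /andP[qr qs] rs _].
have one_of u v w : u != v -> u != w -> v != w ->
    crossr M u v != 0 \/ crossr M u w != 0.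
  move=> uv uw vw; have [uv0|] := eqVneq (crossr M u v) 0; last by left.
  right; apply/eqP => uw0; apply: (npt u v w) => //.
  by rewrite /= !inE !negb_or uv uw vw.
have [pq0 | nz_pq] := eqVneq (crossr M p q) 0.
- have nz_pr : crossr M p r != 0 by case: (one_of p q r) => //; rewrite pq0 eqxx.
  have nz_ps : crossr M p s != 0 by case: (one_of p q s) => //; rewrite pq0 eqxx.
  have [nz_qr | nz_qs] := one_of q r s qr qs rs.
  + by exists p, s, q, r; split=> //; apply/permP => P /=; lia.
  + by exists p, r, q, s.
- have [rs0 | nz_rs] := eqVneq (crossr M r s) 0; last by exists p, q, r, s; split=> //;
    apply/permP => P /=; lia.
  have nz_rp : crossr M r p != 0.
    by case: (one_of r s p) => //; rewrite 1?eq_sym // rs0 eqxx.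
  have nz_sq : crossr M s q != 0.
    by case: (one_of s r q) => //; rewrite 1?eq_sym // crossrN rs0 oppr0 eqxx.
  by exists r, p, s, q; split=> //; apply/permP => P /=; lia.
Qed.

End PlaneRows.

Section FactorModel.
Variables (R : rcfType) (m : nat).
Implicit Types (D Sigma : 'M[R]_m) (G : 'M[R]_(m, 2)).

Definition no_rank1_rep Sigma : Prop :=
  ~ exists (D' : 'M[R]_m) (G' : 'M[R]_(m, 2)),
      posdiag D' /\ (\rank G' <= 1)%N /\ Sigma = D' + G' *m G'^T.

(* The rank-one loading matrix obtained by projecting every row on the line
   spanned by r_a. *)
Definition line_part G a : 'M[R]_(m, 2) :=
  \matrix_(k, c) if c == ord0 then dotr G k a / Num.sqrt (dotr G a a) else 0.

Lemma line_part_rank G a : (\rank (line_part G a) <= 1)%N.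
Proof.
have -> : line_part G a =
    (\col_k (dotr G k a / Num.sqrt (dotr G a a))) *m \row_c (c == ord0)%:R.
  apply/matrixP => k c; rewrite !mxE big_ord1 !mxE.
  by case: (c == ord0); rewrite ?mulr1 ?mulr0.
exact: leq_trans (mxrankM_maxr _ _) (rank_leq_row _).
Qed.

Lemma residual_entry D G a i j : dotr G a a != 0 ->
  (D + G *m G^T - line_part G a *m (line_part G a)^T) i j =
  D i j + crossr G a i * crossr G a j / dotr G a a.
Proof.
move=> nz_a; rewrite !mxE !sum_ord2 !mxE /= -/(dotr G i j) -lagrange.
have nz_s := sqrt_dotr_neq0 nz_a; set s := Num.sqrt _ in nz_s *.
by rewrite -(sqrt_dotrK G a) -/s; field.
Qed.

(* If at most one row is not parallel to the nonzero row r_a, the residual is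
   diagonal and positive, so the model has a rank-one representation. *)
Lemma rank1_rep D G a : posdiag D -> dotr G a a != 0 ->
  (forall i j, crossr G a i != 0 -> crossr G a j != 0 -> i = j) ->
  ~ no_rank1_rep (D + G *m G^T).
Proof.
move=> [Doff Dpos] nz_a single; apply.
exists (D + G *m G^T - line_part G a *m (line_part G a)^T), (line_part G a).
split; [split | split].
- move=> i j ij; rewrite residual_entry // Doff // add0r.
  have [-> | nz_i] := eqVneq (crossr G a i) 0; first by rewrite !mul0r.
  have [-> | nz_j] := eqVneq (crossr G a j) 0; first by rewrite mulr0 mul0r.
  by rewrite (single _ _ nz_i nz_j) eqxx in ij.
- move=> i; rewrite residual_entry //; apply: (lt_le_trans (Dpos i)).
  by rewrite lerDl divr_ge0 ?dotrr_ge0 // -expr2 sqr_ge0.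
- exact: line_part_rank.
- by rewrite subrK.
Qed.

Lemma offdiag_gram Sigma D G u v :
  posdiag D -> Sigma = D + G *m G^T -> u != v -> Sigma u v = dotr G u v.
Proof. by move=> [Doff _] -> uv; rewrite mxE Doff // add0r gram_mxE. Qed.

(* Two loadings with the same off-diagonal inner products have the same norm
   |r_i|^2 as soon as the other rows j, l, p, q give non-parallel pairs (j, l)
   and (p, q): the Gram expansion is then a linear equation for |r_i|^2. *)
Lemma diag_determined G Gm i j l p q :
  (forall u v, u != v -> dotr G u v = dotr Gm u v) ->
  uniq [:: i; j; p; l; q] -> crossr Gm j l != 0 -> crossr Gm p q != 0 ->
  dotr G i i = dotr Gm i i.
Proof.
move=> offeq; rewrite /= !inE !negb_or.
case/and5P => /and4P[ij ip il iq] /and3P[jp _ jq] /andP[pl _] lq _ nz_jl nz_pq.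
rewrite eq_sym in pl.
have EG := gram3_expansion G i j l p q; have EM := gram3_expansion Gm i j l p q.
rewrite (offeq _ _ jp) (offeq _ _ lq) (offeq _ _ jq) (offeq _ _ pl) (offeq _ _ ip)
  (offeq _ _ iq) (offeq j i) ?(offeq l i) 1?eq_sym // in EG.
have nz_coef : dotr Gm j p * dotr Gm l q - dotr Gm j q * dotr Gm l p != 0.
  by rewrite binet_cauchy mulf_neq0.
by apply: (mulIf nz_coef); rewrite EG EM.
Qed.

Lemma diag_determined_of_triples G Gm i p q r s :
  (forall u v, u != v -> dotr G u v = dotr Gm u v) -> no_parallel_triple Gm ->
  uniq [:: i; p; q; r; s] -> dotr G i i = dotr Gm i i.
Proof.
move=> offeq npt; rewrite cons_uniq => /andP[i_pqrs pqrs].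
have [j [l [j' [l' [perm_jl nz_jl nz_jl']]]]] := nonparallel_pairing npt pqrs.
apply: diag_determined offeq _ nz_jl nz_jl'.
by rewrite cons_uniq (perm_uniq perm_jl) (perm_mem perm_jl) i_pqrs.
Qed.

Lemma crossing_outside Sigma D G a (B : {set 'I_m}) :
  posdiag D -> Sigma = D + G *m G^T -> no_rank1_rep Sigma -> dotr G a a != 0 ->
  (#|B| <= 1)%N -> ~ (forall i, crossr G a i != 0 -> i \in B).
Proof.
move=> D_pd -> no1 nz_a B1 inB; apply: (rank1_rep D_pd nz_a) no1 => u v nz_u nz_v.
by move/card_le1_eqP: B1 => /(_ _ _ (inB _ nz_v) (inB _ nz_u)).
Qed.

Lemma cross_outside Sigma D G a (A : {set 'I_m}) d e :
  posdiag D -> Sigma = D + G *m G^T -> no_rank1_rep Sigma -> dotr G a a != 0 ->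
  ~: A = [set d; e] -> (forall i, i \in A -> crossr G a i = 0) ->
  forall i, i \notin A -> crossr G a i != 0.
Proof.
move=> D_pd Sigma_def no1 nz_a A_compl par_a i iA; apply/eqP => ai0.
apply: (crossing_outside (B := ~: A :\ i) D_pd Sigma_def no1 nz_a).
  have := cardsD1 i (~: A); rewrite A_compl cards2 -A_compl inE iA; lia.
move=> x nz_x; rewrite !inE; apply/andP; split.
  by apply: contra_neq nz_x => ->.
by apply: contra nz_x => /par_a ->.
Qed.

Lemma rotated_normal_form Sigma D G a (A : {set 'I_m}) d e :
  posdiag D -> Sigma = D + G *m G^T -> no_rank1_rep Sigma -> dotr G a a != 0 ->
  ~: A = [set d; e] -> (forall i, i \in A -> crossr G a i = 0) ->
  [/\ orthogonal_mx (rotmx G a),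
      forall i, i \in A -> (G *m rotmx G a) i ord_max = 0
    & forall i, i \notin A -> (G *m rotmx G a) i ord_max != 0].
Proof.
move=> D_pd Sigma_def no1 nz_a A_compl par_a; split.
- exact: rotmx_orthogonal.
- by move=> i iA; rewrite rotmx_col1 par_a // mul0r.
- move=> i iA; rewrite rotmx_col1 mulf_neq0 ?invr_eq0 ?sqrt_dotr_neq0 //.
  exact: (cross_outside D_pd Sigma_def no1 nz_a A_compl par_a).
Qed.

End FactorModel.

Lemma others5 (i : 'I_5) : exists p q r s : 'I_5, uniq [:: i; p; q; r; s].
Proof.
case: i => [[|[|[|[|[|//]]]]]] Hi.
- by exists (Ordinal (isT : (1 < 5)%N)), (Ordinal (isT : (2 < 5)%N)),
    (Ordinal (isT : (3 < 5)%N)), (Ordinal (isT : (4 < 5)%N)).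
- by exists (Ordinal (isT : (0 < 5)%N)), (Ordinal (isT : (2 < 5)%N)),
    (Ordinal (isT : (3 < 5)%N)), (Ordinal (isT : (4 < 5)%N)).
- by exists (Ordinal (isT : (0 < 5)%N)), (Ordinal (isT : (1 < 5)%N)),
    (Ordinal (isT : (3 < 5)%N)), (Ordinal (isT : (4 < 5)%N)).
- by exists (Ordinal (isT : (0 < 5)%N)), (Ordinal (isT : (1 < 5)%N)),
    (Ordinal (isT : (2 < 5)%N)), (Ordinal (isT : (4 < 5)%N)).
- by exists (Ordinal (isT : (0 < 5)%N)), (Ordinal (isT : (1 < 5)%N)),
    (Ordinal (isT : (2 < 5)%N)), (Ordinal (isT : (3 < 5)%N)).
Qed.

Section FiveVariables.
Variables (R : rcfType) (Sigma Delta : 'M[R]_5) (Gamma : 'M[R]_(5, 2)).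
Hypotheses (Delta_pd : posdiag Delta) (Sigma_def : Sigma = Delta + Gamma *m Gamma^T).
Hypotheses (Sigma_no1 : no_rank1_rep Sigma)
  (Sigma_rows : forall i : 'I_5, exists j : 'I_5, j != i /\ Sigma i j != 0).

Lemma Gamma_rows_neq0 u : dotr Gamma u u != 0.
Proof.
have [j [ju nz_uj]] := Sigma_rows u.
by apply: (@dotr_neq0 _ _ _ u j); rewrite -(offdiag_gram Delta_pd Sigma_def) // eq_sym.
Qed.

Lemma same_offdiag D (G : 'M[R]_(5, 2)) : posdiag D -> Sigma = D + G *m G^T ->
  forall u v, u != v -> dotr G u v = dotr Gamma u v.
Proof.
move=> D_pd Sigma_G u v uv.
by rewrite -(offdiag_gram D_pd Sigma_G uv) (offdiag_gram Delta_pd Sigma_def uv).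
Qed.

(* A rank-one set of four rows would leave at most one row non-parallel. *)
Lemma kmax_le3 : (kmax Gamma <= 3)%N.
Proof.
apply/bigmax_leqP => A /eqP rk1; rewrite leqNgt; apply/negP => A4.
have [a aA] : exists a, a \in A by apply/card_gt0P; apply: leq_trans A4.
apply: (crossing_outside (B := ~: A) Delta_pd Sigma_def Sigma_no1 (Gamma_rows_neq0 a)).
  by have := cardsC A; rewrite card_ord; lia.
move=> i; apply: contraR; rewrite inE negbK => iA.
by rewrite (rows_of_rank1_cross rk1 aA iA).
Qed.

Lemma kmax_le2_gram_unique D (G : 'M[R]_(5, 2)) : (kmax Gamma <= 2)%N -> posdiag D ->
  Sigma = D + G *m G^T -> G *m G^T = Gamma *m Gamma^T.
Proof.
move=> k2 D_pd Sigma_G; have offeq := same_offdiag D_pd Sigma_G.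
apply/matrixP => u v; rewrite !gram_mxE.
have [<- | uv] := eqVneq u v; last exact: offeq.
have [p [q [r [s uniq5]]]] := others5 u.
exact: diag_determined_of_triples offeq (kmax_no_parallel_triple k2 Gamma_rows_neq0) uniq5.
Qed.

Section RankOneTriple.
Variables (A : {set 'I_5}) (a d e : 'I_5).
Hypotheses (aA : a \in A) (A_compl : ~: A = [set d; e]) (de : d != e).
Hypothesis rkA : \rank (rows_of A Gamma) = 1%N.

Lemma outside_A : d \notin A /\ e \notin A.
Proof. by split; rewrite -in_setC A_compl !inE eqxx ?orbT. Qed.

Lemma Gamma_cross_across u v : u \in A -> v \notin A -> crossr Gamma u v != 0.
Proof.
move=> uA; apply: (cross_outside Delta_pd Sigma_def Sigma_no1 (Gamma_rows_neq0 u) A_compl).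
by move=> i; apply: rows_of_rank1_cross rkA uA.
Qed.

(* The norms of the rows indexed by A are identified: for i in A, pair the two
   other elements of A with d and e. *)
Lemma diag_on_A D (G : 'M[R]_(5, 2)) : posdiag D -> Sigma = D + G *m G^T ->
  forall i, i \in A -> dotr G i i = dotr Gamma i i.
Proof.
move=> D_pd Sigma_G i iA; have [dA eA] := outside_A.
have : #|A :\ i| == 2%N.
  have := cardsC A; have := cardsD1 i A; rewrite A_compl cards2 de iA card_ord /=; lia.
case/cards2P => x [y [xy Ai]].
have /andP[xi xA] : (x != i) && (x \in A) by rewrite -in_setD1 Ai !inE eqxx.
have /andP[yi yA] : (y != i) && (y \in A) by rewrite -in_setD1 Ai !inE eqxx orbT.
have out u v : u \in A -> v \notin A -> u != v by move=> uA; apply: contraNneq => <-.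
apply: diag_determined (same_offdiag D_pd Sigma_G) _
  (Gamma_cross_across xA dA) (Gamma_cross_across yA eA).
by rewrite /= !inE !negb_or (eq_sym i x) xi (eq_sym i y) yi xy de !out.
Qed.

(* In every representation the rows of A stay parallel to r_a, since the
   Lagrange expression for det(r_a, r_i)^2 only involves identified entries. *)
Lemma rep_parallel_on_A D (G : 'M[R]_(5, 2)) : posdiag D -> Sigma = D + G *m G^T ->
  forall i, i \in A -> crossr G a i = 0.
Proof.
move=> D_pd Sigma_G i iA; have [-> | ia] := eqVneq i a; first exact: crossrr.
have diagG := diag_on_A D_pd Sigma_G.
apply/eqP; rewrite -sqrf_eq0 expr2 -lagrange (diagG a) // (diagG i) //.
rewrite (same_offdiag D_pd Sigma_G ia).
by rewrite lagrange (rows_of_rank1_cross rkA aA iA) mul0r.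
Qed.

Lemma other_rep_normal_form D (G : 'M[R]_(5, 2)) : posdiag D -> Sigma = D + G *m G^T ->
  exists Q' : 'M[R]_2,
    [/\ orthogonal_mx Q',
        forall i, i \in A -> (G *m Q') i ord_max = 0,
        forall i, i \notin A -> (G *m Q') i ord_max != 0,
        forall i, (G *m Q') i ord0 = (Gamma *m rotmx Gamma a) i ord0
      & \prod_(i in ~: A) (G *m Q') i ord_max
        = \prod_(i in ~: A) (Gamma *m rotmx Gamma a) i ord_max].
Proof.
move=> D_pd Sigma_G; have diagG := diag_on_A D_pd Sigma_G.
have offeq := same_offdiag D_pd Sigma_G.
have nz_a : dotr G a a != 0 by rewrite diagG ?Gamma_rows_neq0.
have [Q_orth Q_zero Q_nz] := rotated_normal_form D_pd Sigma_G Sigma_no1 nz_a A_compl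
  (rep_parallel_on_A D_pd Sigma_G).
exists (rotmx G a); split=> //.
  move=> i; rewrite !rotmx_col0 (diagG a aA).
  by have [-> | ia] := eqVneq i a; [rewrite diagG | rewrite offeq].
have [dA eA] := outside_A.
have da : d != a by apply: contraNneq dA => ->.
have ea : e != a by apply: contraNneq eA => ->.
rewrite A_compl !big_setU1 ?big_set1 ?inE //= !rotmx_col1 [LHS]mulrACA [RHS]mulrACA.
by rewrite -!lagrange (diagG a aA) !offeq.
Qed.

Lemma rank_one_triple_normal_form : exists Q : 'M[R]_2,
  [/\ orthogonal_mx Q,
      forall i, i \in A -> (Gamma *m Q) i ord_max = 0,
      forall i, i \in A -> (Gamma *m Q) i ord0 != 0,
      forall i, i \notin A -> (Gamma *m Q) i ord_max != 0
    & forall (D : 'M[R]_5) (G : 'M[R]_(5, 2)),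
        posdiag D -> Sigma = D + G *m G^T ->
        exists Q' : 'M[R]_2,
          [/\ orthogonal_mx Q',
              forall i, i \in A -> (G *m Q') i ord_max = 0,
              forall i, i \notin A -> (G *m Q') i ord_max != 0,
              forall i, (G *m Q') i ord0 = (Gamma *m Q) i ord0
            & \prod_(i in ~: A) (G *m Q') i ord_max
              = \prod_(i in ~: A) (Gamma *m Q) i ord_max]].
Proof.
have [Q_orth Q_zero Q_nz] := rotated_normal_form Delta_pd Sigma_def Sigma_no1
  (Gamma_rows_neq0 a) A_compl (rep_parallel_on_A Delta_pd Sigma_def).
exists (rotmx Gamma a); split=> //; last exact: other_rep_normal_form.
move=> i iA; rewrite rotmx_col0 mulf_neq0 ?invr_eq0 ?sqrt_dotr_neq0 ?Gamma_rows_neq0 //.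
by rewrite parallel_dotr_neq0 ?Gamma_rows_neq0 ?(rows_of_rank1_cross rkA aA iA).
Qed.

End RankOneTriple.
End FiveVariables.

Unset Implicit Arguments.

Theorem lemma4 (R : rcfType) (Sigma Delta : 'M[R]_5) (Gamma : 'M[R]_(5, 2)) :
  posdef Sigma ->
  posdiag Delta ->
  \rank Gamma = 2%N ->
  Sigma = Delta + Gamma *m Gamma^T ->
  ~ (exists (D' : 'M[R]_5) (G' : 'M[R]_(5, 2)),
        posdiag D' /\ (\rank G' <= 1)%N /\ Sigma = D' + G' *m G'^T) ->
  (forall i : 'I_5, exists j : 'I_5, j != i /\ Sigma i j != 0) ->
  [/\ (kmax Gamma <= 3)%N,
      (kmax Gamma = 1%N \/ kmax Gamma = 2%N) ->
        forall (D : 'M[R]_5) (G : 'M[R]_(5, 2)),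
          posdiag D -> Sigma = D + G *m G^T -> G *m G^T = Gamma *m Gamma^T
    & kmax Gamma = 3%N ->
        forall A : {set 'I_5}, #|A| = 3%N -> \rank (rows_of A Gamma) = 1%N ->
        exists Q : 'M[R]_2,
          [/\ orthogonal_mx Q,
              forall i, i \in A -> (Gamma *m Q) i ord_max = 0,
              forall i, i \in A -> (Gamma *m Q) i ord0 != 0,
              forall i, i \notin A -> (Gamma *m Q) i ord_max != 0
            & forall (D : 'M[R]_5) (G : 'M[R]_(5, 2)),
                posdiag D -> Sigma = D + G *m G^T ->
                exists Q' : 'M[R]_2,
                  [/\ orthogonal_mx Q',
                      forall i, i \in A -> (G *m Q') i ord_max = 0,
                      forall i, i \notin A -> (G *m Q') i ord_max != 0,
                      forall i, (G *m Q') i ord0 = (Gamma *m Q) i ord0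
                    & \prod_(i in ~: A) (G *m Q') i ord_max
                      = \prod_(i in ~: A) (Gamma *m Q) i ord_max]]].
Proof.
move=> _ Delta_pd _ Sigma_def Sigma_no1 Sigma_rows; split.
- exact: kmax_le3 Delta_pd Sigma_def Sigma_no1 Sigma_rows.
- move=> k12 D G; apply: (kmax_le2_gram_unique Delta_pd Sigma_def Sigma_rows).
  by case: k12 => ->.
- move=> _ A A3 rkA.
  have [a aA] : exists a, a \in A by apply/card_gt0P; rewrite A3.
  have : #|~: A| == 2%N by have := cardsC A; rewrite A3 card_ord; lia.
  case/cards2P => d [e [de A_compl]].
  exact (rank_one_triple_normal_form Delta_pd Sigma_def Sigma_no1 Sigma_rows aA A_compl de rkA).
Qed.
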